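(* Let $a<b$ be real numbers and let $f:[a,b]\to\mathbb{R}$ be an increasing function which is either convex or concave on $[a,b]$. Then for every integer $n\ge1$, $$A_{n+1}\le A_n\qquad\text{and}\qquad B_n\le B_{n+1}.$$
   Context: For a function $f:[a,b]\to\mathbb{R}$ and integers $n\ge1$, put $x_i^{(n)}=a+i\frac{b-a}{n}$ for $i=0,1,\dots,n$, and define the Riemann sums $$A_n=\frac{b-a}{n}\sum_{i=1}^{n} f\big(x_i^{(n)}\big),\qquad B_n=\frac{b-a}{n}\sum_{i=0}^{n-1} f\big(x_i^{(n)}\big).$$ *)

From Stdlib Require Import Reals Lra.
Open Scope R_scope.

Definition increasing_on (f : R -> R) (a b : R) : Prop :=
  forall x y, a <= x -> x <= y -> y <= b -> f x <= f y.

Definition convex_on (f : R -> R) (a b : R) : Prop :=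
  forall x y t, a <= x <= b -> a <= y <= b -> 0 <= t <= 1 ->
    f (t * x + (1 - t) * y) <= t * f x + (1 - t) * f y.

Definition concave_on (f : R -> R) (a b : R) : Prop :=
  forall x y t, a <= x <= b -> a <= y <= b -> 0 <= t <= 1 ->
    t * f x + (1 - t) * f y <= f (t * x + (1 - t) * y).

Definition xpt (a b : R) (n i : nat) : R := a + INR i * ((b - a) / INR n).

(* A_n = (b-a)/n * sum_{i=1}^{n} f(x_i),  B_n = (b-a)/n * sum_{i=0}^{n-1} f(x_i).
   Both assume n >= 1 (sum_f_R0 g k has k+1 terms g 0 .. g k). *)
Definition A_sum (f : R -> R) (a b : R) (n : nat) : R :=
  (b - a) / INR n * sum_f_R0 (fun j => f (xpt a b n (S j))) (n - 1).

Definition B_sum (f : R -> R) (a b : R) (n : nat) : R :=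
  (b - a) / INR n * sum_f_R0 (fun j => f (xpt a b n j)) (n - 1).

(* Write x_i = a + i(b-a)/n for the
   n-grid and y_i = a + i(b-a)/(n+1) for the (n+1)-grid.

   The points of the two grids interlace:
     (n+1) y_(j+1) = (j+1) x_j + (n-j) x_(j+1)   and   n x_j = (n-j) y_j + j y_(j+1),
   so convexity bounds f at one grid by weighted values of f at the other.
   Summing these bounds (weighted sums collapse by Abel summation) gives
     (n+1) Σ_{k=1}^{n+1} f(y_k) <= f(a) + (n+2) Σ_{k=1}^{n} f(x_k),
     n Σ_{k=0}^{n-1} f(x_k) <= f(a) + (n-1) Σ_{k=0}^{n} f(y_k),
   and monotonicity (every value is at least f(a)) turns these into
   A_(n+1) <= A_n and B_n <= B_(n+1).

   The reflection g(x) = -f(a+b-x) is increasing and convex, and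
   reversing the order of summation shows A_n(f) = -B_n(g), B_n(f) = -A_n(g);
   the convex case for g then yields the claim for f. *)
From Stdlib Require Import Reals Lra Lia Psatz.
Open Scope R_scope.

Lemma convex_weighted f a b x y z al be :
  convex_on f a b -> a <= x <= b -> a <= y <= b ->
  0 <= al -> 0 <= be -> 0 < al + be -> (al + be) * z = al * x + be * y ->
  (al + be) * f z <= al * f x + be * f y.
Proof.
  intros hconv hx hy hal hbe hpos hz.
  set (t := al / (al + be)).
  assert (ht : 0 <= t <= 1).
  { unfold t; split.
    - apply Rle_mult_inv_pos; lra.
    - apply (Rmult_le_reg_r (al + be)); [lra|]. field_simplify; lra. }
  assert (hzt : z = t * x + (1 - t) * y).
  { apply (Rmult_eq_reg_l (al + be)); [|lra]. unfold t. field_simplify; lra. }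
  pose proof (hconv x y t hx hy ht) as hcvx. rewrite <- hzt in hcvx.
  replace (al * f x + be * f y) with ((al + be) * (t * f x + (1 - t) * f y))
    by (unfold t; field; lra).
  apply Rmult_le_compat_l; lra.
Qed.

Lemma rescale_le c p q u v :
  0 <= c -> 0 < p -> 0 < q -> p * u <= q * v -> c / q * u <= c / p * v.
Proof.
  intros hc hp hq huv.
  replace (c / q * u) with (c / (p * q) * (p * u)) by (field; lra).
  replace (c / p * v) with (c / (p * q) * (q * v)) by (field; lra).
  apply Rmult_le_compat_l; [apply Rle_mult_inv_pos; nra | exact huv].
Qed.

Lemma weighted_sum_A (F : nat -> R) (c : R) m :
  sum_f_R0 (fun j => (INR j + 1) * F j + (c - INR j) * F (S j)) m =
  F 0%nat + (c + 2) * sum_f_R0 (fun j => F (S j)) m - (INR m + 2) * F (S m).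
Proof.
  induction m as [|m IH]; cbn [sum_f_R0].
  - simpl; ring.
  - rewrite IH, S_INR; ring.
Qed.

Lemma weighted_sum_B (G : nat -> R) (c : R) m :
  sum_f_R0 (fun j => (c - INR j) * G j + INR j * G (S j)) m =
  G 0%nat + (c - 1) * sum_f_R0 G m + INR m * G (S m).
Proof.
  induction m as [|m IH]; cbn [sum_f_R0].
  - simpl; ring.
  - rewrite IH, S_INR; ring.
Qed.

Lemma sum_scal_l (u : nat -> R) (c : R) m :
  sum_f_R0 (fun j => c * u j) m = c * sum_f_R0 u m.
Proof. induction m as [|m IH]; cbn [sum_f_R0]; [|rewrite IH]; ring. Qed.

Lemma sum_f_R0_reverse (u : nat -> R) m :
  sum_f_R0 (fun j => u (m - j)%nat) m = sum_f_R0 u m.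
Proof.
  revert u; induction m as [|m IH]; intros u; [reflexivity|].
  rewrite tech5, Nat.sub_diag, (decomp_sum u (S m)) by lia; simpl pred.
  rewrite <- (IH (fun k => u (S k))).
  rewrite (sum_eq _ (fun j => u (S (m - j)))) by (intros j hj; f_equal; lia).
  ring.
Qed.

Lemma A_sum_S f a b m :
  A_sum f a b (S m) = (b - a) / INR (S m) * sum_f_R0 (fun j => f (xpt a b (S m) (S j))) m.
Proof. unfold A_sum; now rewrite Nat.sub_succ, Nat.sub_0_r. Qed.

Lemma B_sum_S f a b m :
  B_sum f a b (S m) = (b - a) / INR (S m) * sum_f_R0 (fun j => f (xpt a b (S m) j)) m.
Proof. unfold B_sum; now rewrite Nat.sub_succ, Nat.sub_0_r. Qed.

Section Grid.
Variables (a b : R).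
Hypothesis hab : a < b.

Lemma xpt_range n i : (1 <= n)%nat -> (i <= n)%nat -> a <= xpt a b n i <= b.
Proof.
  intros hn hi. unfold xpt.
  assert (hn' : 0 < INR n) by (apply lt_0_INR; lia).
  assert (hi' : INR i <= INR n) by (apply le_INR; lia).
  pose proof (pos_INR i).
  assert (hstep : INR i * ((b - a) / INR n) = (b - a) * (INR i / INR n)) by (field; lra).
  assert (hratio : 0 <= INR i / INR n <= 1).
  { split; [apply Rle_mult_inv_pos; lra|].
    apply (Rmult_le_reg_r (INR n)); [lra|]. field_simplify; lra. }
  rewrite hstep; nra.
Qed.

Lemma xpt_le n i j : (1 <= n)%nat -> (i <= j)%nat -> xpt a b n i <= xpt a b n j.
Proof.
  intros hn hij. unfold xpt.
  assert (0 < INR n) by (apply lt_0_INR; lia).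
  assert (INR i <= INR j) by (apply le_INR; lia).
  assert (0 <= (b - a) / INR n) by (apply Rle_mult_inv_pos; lra).
  nra.
Qed.

Lemma increasing_grid_ge f n i : increasing_on f a b -> (1 <= n)%nat -> (i <= n)%nat ->
  f (xpt a b n 0) <= f (xpt a b n i).
Proof.
  intros hinc hn hi.
  destruct (xpt_range n 0 hn ltac:(lia)), (xpt_range n i hn hi).
  apply hinc; try lra. apply xpt_le; lia.
Qed.

Lemma interlace_A n j : (1 <= n)%nat ->
  INR (S n) * xpt a b (S n) (S j) = (INR j + 1) * xpt a b n j + (INR n - INR j) * xpt a b n (S j).
Proof.
  intros hn. assert (0 < INR n) by (apply lt_0_INR; lia).
  unfold xpt; rewrite !S_INR; field; lra.
Qed.

Lemma interlace_B n j : (1 <= n)%nat ->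
  INR n * xpt a b n j = (INR n - INR j) * xpt a b (S n) j + INR j * xpt a b (S n) (S j).
Proof.
  intros hn. assert (0 < INR n) by (apply lt_0_INR; lia).
  unfold xpt; rewrite !S_INR; field; lra.
Qed.

Lemma xpt_reflect n i : (1 <= n)%nat -> (i <= n)%nat ->
  a + b - xpt a b n i = xpt a b n (n - i).
Proof.
  intros hn hi. assert (0 < INR n) by (apply lt_0_INR; lia).
  unfold xpt; rewrite minus_INR by exact hi; field; lra.
Qed.

End Grid.

Section ConvexCase.
Variables (f : R -> R) (a b : R).
Hypotheses (hab : a < b) (hinc : increasing_on f a b) (hconv : convex_on f a b).

(* A_(n+1) <= A_n: the closing inequality is
   n (n+1) Σ_{k=1}^{n+1} f(y_k) <= n f(a) + n (n+2) Σ_{k=1}^{n} f(x_k) <= (n+1)^2 Σ_{k=1}^{n} f(x_k). *)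
Lemma convex_A_decreasing m : A_sum f a b (S (S m)) <= A_sum f a b (S m).
Proof.
  rewrite !A_sum_S.
  set (N := INR (S m)).
  assert (hN : 1 <= N) by (unfold N; rewrite S_INR; pose proof (pos_INR m); lra).
  assert (hN1 : INR (S (S m)) = N + 1) by (unfold N; rewrite (S_INR (S m)); ring).
  set (F := fun j => f (xpt a b (S m) j)).
  set (G := fun j => f (xpt a b (S (S m)) j)).
  change ((b - a) / INR (S (S m)) * sum_f_R0 (fun j => G (S j)) (S m) <=
          (b - a) / N * sum_f_R0 (fun j => F (S j)) m).
  assert (hstep : forall j, (j <= m)%nat ->
            (N + 1) * G (S j) <= (INR j + 1) * F j + (N - INR j) * F (S j)).
  { intros j hj.
    assert (INR j + 1 <= N) by (unfold N; rewrite S_INR; apply Rplus_le_compat_r, le_INR; lia).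
    pose proof (pos_INR j).
    replace (N + 1) with ((INR j + 1) + (N - INR j)) by ring.
    apply (convex_weighted f a b); try (assumption || lra).
    - apply xpt_range; lia || lra.
    - apply xpt_range; lia || lra.
    - replace ((INR j + 1) + (N - INR j)) with (INR (S (S m))) by (rewrite hN1; ring).
      apply interlace_A; lia. }
  assert (hsum := sum_Rle _ _ m hstep).
  rewrite sum_scal_l, weighted_sum_A in hsum.
  assert (hlast : G (S (S m)) = F (S m)).
  { unfold G, F, xpt. f_equal. rewrite hN1. fold N. field. lra. }
  assert (hlow : N * F 0%nat <= sum_f_R0 (fun j => F (S j)) m).
  { assert (h := sum_Rle (fun _ => F 0%nat) (fun j => F (S j)) m
                  (fun j hj => increasing_grid_ge a b hab f (S m) (S j) hinc ltac:(lia) ltac:(lia))).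
    rewrite sum_cte in h. fold N in h. lra. }
  apply rescale_le; [lra | lra | rewrite hN1; lra |].
  rewrite hN1, tech5, hlast.
  replace (INR m + 2) with (N + 1) in hsum by (unfold N; rewrite S_INR; ring).
  nra.
Qed.

(* B_n <= B_(n+1): the closing inequality is
   n (n+1) Σ_{k=0}^{n-1} f(x_k) <= (n+1) f(a) + (n^2-1) Σ_{k=0}^{n} f(y_k) <= n^2 Σ_{k=0}^{n} f(y_k). *)
Lemma convex_B_increasing m : B_sum f a b (S m) <= B_sum f a b (S (S m)).
Proof.
  rewrite !B_sum_S.
  set (N := INR (S m)).
  assert (hN : 1 <= N) by (unfold N; rewrite S_INR; pose proof (pos_INR m); lra).
  assert (hN1 : INR (S (S m)) = N + 1) by (unfold N; rewrite (S_INR (S m)); ring).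
  set (F := fun j => f (xpt a b (S m) j)).
  set (G := fun j => f (xpt a b (S (S m)) j)).
  change ((b - a) / N * sum_f_R0 F m <= (b - a) / INR (S (S m)) * sum_f_R0 G (S m)).
  assert (hstep : forall j, (j <= m)%nat ->
            N * F j <= (N - INR j) * G j + INR j * G (S j)).
  { intros j hj.
    assert (INR j + 1 <= N) by (unfold N; rewrite S_INR; apply Rplus_le_compat_r, le_INR; lia).
    pose proof (pos_INR j).
    replace N with ((N - INR j) + INR j) at 1 by ring.
    apply (convex_weighted f a b); try (assumption || lra).
    - apply xpt_range; lia || lra.
    - apply xpt_range; lia || lra.
    - replace ((N - INR j) + INR j) with N by ring.
      apply interlace_B; lia. }
  assert (hsum := sum_Rle _ _ m hstep).
  rewrite sum_scal_l, weighted_sum_B in hsum.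
  assert (hlow : (N + 1) * G 0%nat <= sum_f_R0 G (S m)).
  { assert (h := sum_Rle (fun _ => G 0%nat) G (S m)
                  (fun j hj => increasing_grid_ge a b hab f (S (S m)) j hinc ltac:(lia) ltac:(lia))).
    rewrite sum_cte, hN1 in h. lra. }
  apply rescale_le; [lra | rewrite hN1; lra | lra |].
  rewrite hN1. rewrite tech5 in hlow |- *.
  replace (INR m) with (N - 1) in hsum by (unfold N; rewrite S_INR; ring).
  nra.
Qed.

End ConvexCase.

Definition reflection (f : R -> R) (a b : R) : R -> R := fun x => - f (a + b - x).

Lemma reflection_increasing f a b :
  increasing_on f a b -> increasing_on (reflection f a b) a b.
Proof.
  intros hinc x y hx hxy hy. unfold reflection.
  apply Ropp_le_contravar, hinc; lra.
Qed.

Lemma reflection_convex f a b :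
  concave_on f a b -> convex_on (reflection f a b) a b.
Proof.
  intros hconc x y t hx hy ht. unfold reflection.
  replace (a + b - (t * x + (1 - t) * y)) with (t * (a + b - x) + (1 - t) * (a + b - y)) by ring.
  pose proof (hconc (a + b - x) (a + b - y) t ltac:(lra) ltac:(lra) ht). lra.
Qed.

Lemma A_sum_reflection f a b m :
  a < b -> A_sum f a b (S m) = - B_sum (reflection f a b) a b (S m).
Proof.
  intros hab. set (g := reflection f a b).
  rewrite A_sum_S, B_sum_S, <- (sum_f_R0_reverse (fun j => g (xpt a b (S m) j))).
  rewrite (sum_eq (fun j => g (xpt a b (S m) (m - j))) (fun j => -1 * f (xpt a b (S m) (S j)))),
    sum_scal_l; [ring|].
  intros j hj. unfold g, reflection. rewrite xpt_reflect by (lia || lra).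
  replace (S m - (m - j))%nat with (S j) by lia; ring.
Qed.

Lemma B_sum_reflection f a b m :
  a < b -> B_sum f a b (S m) = - A_sum (reflection f a b) a b (S m).
Proof.
  intros hab. set (g := reflection f a b).
  rewrite A_sum_S, B_sum_S, <- (sum_f_R0_reverse (fun j => g (xpt a b (S m) (S j)))).
  rewrite (sum_eq (fun j => g (xpt a b (S m) (S (m - j)))) (fun j => -1 * f (xpt a b (S m) j))),
    sum_scal_l; [ring|].
  intros j hj. unfold g, reflection. rewrite xpt_reflect by (lia || lra).
  replace (S m - S (m - j))%nat with j by lia; ring.
Qed.

Theorem corollary2p2 (f : R -> R) (a b : R) (hab : a < b)
  (hinc : increasing_on f a b)
  (hcc : convex_on f a b \/ concave_on f a b)
  (n : nat) (hn : (1 <= n)%nat) :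
  A_sum f a b (S n) <= A_sum f a b n /\ B_sum f a b n <= B_sum f a b (S n).
Proof.
  destruct n as [|m]; [lia|].
  destruct hcc as [hconv | hconc].
  - split; [apply convex_A_decreasing | apply convex_B_increasing]; assumption.
  - pose proof (reflection_increasing f a b hinc) as hinc'.
    pose proof (reflection_convex f a b hconc) as hconv'.
    rewrite !(A_sum_reflection f a b _ hab), !(B_sum_reflection f a b _ hab).
    pose proof (convex_A_decreasing _ a b hab hinc' hconv' m).
    pose proof (convex_B_increasing _ a b hab hinc' hconv' m).
    split; lra.
Qed.
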